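(* Let $S,Q$ be disjoint finite sets, $\mathcal{V}_{SQ}$ a vector space on $S\uplus Q$, $Q'$ a disjoint copy of $Q$, and $\mathcal{V}_{QQ'}:=\mathcal{V}_{SQ}\leftrightarrow(\mathcal{V}_{SQ})_{SQ'}$. Then: 1. $\mathcal{V}_{QQ'}=(\mathcal{V}_{QQ'})_{Q'Q}$. 2. For every $f_Q\in\mathcal{V}_{QQ'}\circ Q$ we have $(f_Q,f_{Q'})\in\mathcal{V}_{QQ'}$, and for every $f_{Q'}\in\mathcal{V}_{QQ'}\circ Q'$ we have $(f_Q,f_{Q'})\in\mathcal{V}_{QQ'}$, where $f_Q,f_{Q'}$ are copies of each other. 3. $\mathcal{V}_{QQ'}\circ Q=\mathcal{V}_{SQ}\circ Q$ and $\mathcal{V}_{QQ'}\times Q=\mathcal{V}_{SQ}\times Q$. 4. $(\mathcal{V}_{SQ})_{SQ'}=\mathcal{V}_{SQ}\leftrightarrow\mathcal{V}_{QQ'}$ and $\mathcal{V}_{SQ}=(\mathcal{V}_{SQ})_{SQ'}\leftrightarrow\mathcal{V}_{QQ'}$.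
   Context: Vectors on a finite set $X$ are functions $X\to\mathbb{F}$; vector spaces on $X$ are subspaces of $\mathbb{F}^X$. For $\mathcal{V}_{AB}$ on $A\uplus B$: $\mathcal{V}_{AB}\circ A:=\{f_A:(f_A,f_B)\in\mathcal{V}_{AB}\}$, $\mathcal{V}_{AB}\times A:=\{f_A:(f_A,0_B)\in\mathcal{V}_{AB}\}$. For spaces $\mathcal{V}_{AB}$ on $A\uplus B$ and $\mathcal{V}_{BC}$ on $B\uplus C$ ($A,B,C$ pairwise disjoint), $\mathcal{V}_{AB}\leftrightarrow\mathcal{V}_{BC}:=\{(f_A,g_C):\exists h_B,\ (f_A,h_B)\in\mathcal{V}_{AB},(h_B,g_C)\in\mathcal{V}_{BC}\}$. If $Q'$ is a disjoint copy of $Q$ (bijection $e\mapsto e'$), a vector $f_{Q'}$ is the copy of $f_Q$ if $f_{Q'}(e')=f_Q(e)$; $(\mathcal{V}_{SQ})_{SQ'}:=\{(f_S,f_{Q'}):(f_S,f_Q)\in\mathcal{V}_{SQ}\}$; and $(\mathcal{V}_{QQ'})_{Q'Q}:=\{(g_Q,f_{Q'}):(f_Q,g_{Q'})\in\mathcal{V}_{QQ'}\}$, where $g_Q$ is the copy of $g_{Q'}$ and $f_{Q'}$ the copy of $f_Q$ (interchange of the roles of $Q$ and $Q'$). *)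

From mathcomp Require Import all_boot all_order all_algebra.
Set Implicit Arguments. Unset Strict Implicit. Unset Printing Implicit Defensive.
Import GRing.Theory.
Local Open Scope ring_scope.

Section Defs.
Variable F : fieldType.

(* A vector on A ⊎ B is a pair (f_A, f_B); a set of such vectors. *)
Definition sp (A B : finType) := {ffun A -> F} * {ffun B -> F} -> Prop.

Definition is_vspace (A B : finType) (V : sp A B) : Prop :=
  V ([ffun _ => 0], [ffun _ => 0]) /\
  forall (a : F) (f1 f2 : {ffun A -> F}) (g1 g2 : {ffun B -> F}),
    V (f1, g1) -> V (f2, g2) ->
    V ([ffun x => a * f1 x + f2 x], [ffun y => a * g1 y + g2 y]).

Definition sp_eq (A B : finType) (V W : sp A B) : Prop :=
  forall f g, V (f, g) <-> W (f, g).

Definition restr1 (A B : finType) (V : sp A B) : {ffun A -> F} -> Prop :=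
  fun f => exists g, V (f, g).
Definition restr2 (A B : finType) (V : sp A B) : {ffun B -> F} -> Prop :=
  fun g => exists f, V (f, g).

Definition contr1 (A B : finType) (V : sp A B) : {ffun A -> F} -> Prop :=
  fun f => V (f, [ffun _ => 0]).
Definition contr2 (A B : finType) (V : sp A B) : {ffun B -> F} -> Prop :=
  fun g => V ([ffun _ => 0], g).

Definition flip (A B : finType) (V : sp A B) : sp B A :=
  fun p => V (p.2, p.1).

Definition mcomp (A B C : finType) (V1 : sp A B) (V2 : sp B C) : sp A C :=
  fun p => exists h : {ffun B -> F}, V1 (p.1, h) /\ V2 (h, p.2).

(* Copies: Q' is a disjoint copy of Q via the bijection e : Q -> Q'
   (with inverse e'). *)
Definition copy_to (Q Q' : finType) (e' : Q' -> Q) (f : {ffun Q -> F})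
  : {ffun Q' -> F} := [ffun x' => f (e' x')].
Definition copy_from (Q Q' : finType) (e : Q -> Q') (g : {ffun Q' -> F})
  : {ffun Q -> F} := [ffun x => g (e x)].

Definition copySQ (S Q Q' : finType) (e : Q -> Q') (V : sp S Q) : sp S Q' :=
  fun p => V (p.1, copy_from e p.2).

Definition swapQQ (Q Q' : finType) (e : Q -> Q') (e' : Q' -> Q) (V : sp Q Q')
  : sp Q Q' :=
  fun p => V (copy_from e p.2, copy_to e' p.1).

Definition VQQ (S Q Q' : finType) (e : Q -> Q') (V : sp S Q) : sp Q Q' :=
  mcomp (flip V) (copySQ e V).

End Defs.

(* Up to renaming the second block by the copy, V_QQ' is the space of pairs
   (f1, f2) having a common S-part in V_SQ.  This relation is visibly
   symmetric and reflexive on V_SQ o Q; closure of V_SQ under subtraction,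
   (a, d) = (a, b) - (c, b) + (c, d), makes it transitive against V_SQ, which
   gives the contraction identity and the two composition identities. *)
From mathcomp Require Import all_boot all_order all_algebra.
From mathcomp Require Import ring.
Set Implicit Arguments. Unset Strict Implicit. Unset Printing Implicit Defensive.
Import GRing.Theory.
Local Open Scope ring_scope.

Section SelfComposition.
Variables (F : fieldType) (A B : finType) (V : sp F A B).

Definition self_mcomp : sp F B B := mcomp (flip V) V.

Lemma vspace_zigzag a b c d : is_vspace V ->
  V (a, b) -> V (c, b) -> V (c, d) -> V (a, d).
Proof.
move=> [_ Vlin] Vab Vcb Vcd.
have := Vlin 1 _ _ _ _ (Vlin (-1) _ _ _ _ Vcb Vab) Vcd.
by congr V; congr pair; apply/ffunP => x; rewrite !ffunE; ring.
Qed.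

Lemma self_mcompC f g : self_mcomp (f, g) -> self_mcomp (g, f).
Proof. by case=> s [Vsf Vsg]; exists s. Qed.

Lemma self_mcomp_refl f : restr2 V f -> self_mcomp (f, f).
Proof. by case=> s Vsf; exists s. Qed.

Lemma restr1_self_mcomp f : restr1 self_mcomp f <-> restr2 V f.
Proof.
split; first by case=> g [s [Vsf _]]; exists s.
by move=> Vf; exists f; apply: self_mcomp_refl.
Qed.

Lemma contr1_self_mcomp f : is_vspace V ->
  contr1 self_mcomp f <-> contr2 V f.
Proof.
move=> hV; split; first by case=> s [Vsf Vs0]; exact: vspace_zigzag hV hV.1 Vs0 Vsf.
by move=> V0f; exists [ffun _ => 0]; split=> //; exact: hV.1.
Qed.

Lemma mcomp_self_mcomp : is_vspace V -> sp_eq V (mcomp V self_mcomp).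
Proof.
move=> hV s g; split; first by move=> Vsg; exists g; split=> //; exists s.
by case=> h [Vsh [t [Vth Vtg]]]; exact: vspace_zigzag hV Vsh Vth Vtg.
Qed.

End SelfComposition.

Section Copies.
Variables (F : fieldType) (Q Q' : finType) (e : Q -> Q') (e' : Q' -> Q).

Lemma copy_from0 : copy_from e [ffun _ => 0 : F] = [ffun _ => 0].
Proof. by apply/ffunP => x; rewrite !ffunE. Qed.

Hypothesis he : cancel e e'.

Lemma copy_toK : cancel (copy_to (F := F) e') (copy_from e).
Proof. by move=> f; apply/ffunP => x; rewrite !ffunE he. Qed.

Lemma exists_copy_from (P : {ffun Q -> F} -> Prop) :
  (exists g, P (copy_from e g)) <-> exists f, P f.
Proof.
split; first by case=> g; exists (copy_from e g).
by case=> f Pf; exists (copy_to e' f); rewrite copy_toK.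
Qed.

End Copies.

Theorem theorem5 (F : fieldType) (S Q Q' : finType)
  (e : Q -> Q') (e' : Q' -> Q) (he : cancel e e') (he' : cancel e' e)
  (VSQ : sp F S Q) (hV : is_vspace VSQ) :
  let VQQ' := VQQ e VSQ in
  let VSQ' := copySQ e VSQ in
  (* 1 *)
  sp_eq VQQ' (swapQQ e e' VQQ') /\
  (* 2 *)
  (forall fQ, restr1 VQQ' fQ -> VQQ' (fQ, copy_to e' fQ)) /\
  (forall fQ', restr2 VQQ' fQ' -> VQQ' (copy_from e fQ', fQ')) /\
  (* 3 *)
  (forall fQ, restr1 VQQ' fQ <-> restr2 VSQ fQ) /\
  (forall fQ, contr1 VQQ' fQ <-> contr2 VSQ fQ) /\
  (* 4 *)
  sp_eq VSQ' (mcomp VSQ VQQ') /\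
  sp_eq VSQ (mcomp VSQ' (flip VQQ')).
Proof.
move=> VQQ' VSQ'.
have VQQ'E f g : VQQ' (f, g) = self_mcomp VSQ (f, copy_from e g) by [].
have restr1_VQQ' f : restr1 VQQ' f <-> restr2 VSQ f.
  rewrite -restr1_self_mcomp.
  exact: (exists_copy_from he (fun h => self_mcomp VSQ (f, h))).
split; [|split; [|split; [|split; [|split; [|split]]]]].
- by move=> f g; rewrite /swapQQ /= !VQQ'E copy_toK //; split; apply: self_mcompC.
- by move=> f /restr1_VQQ' Vf; rewrite VQQ'E copy_toK //; apply: self_mcomp_refl.
- move=> g [f]; rewrite !VQQ'E => /self_mcompC Vgf.
  by apply/self_mcomp_refl/restr1_self_mcomp; exists f.
- exact: restr1_VQQ'.
- by move=> f; rewrite /contr1 VQQ'E copy_from0; apply: contr1_self_mcomp.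
- by move=> s g; exact: (mcomp_self_mcomp hV s (copy_from e g)).
- move=> s f; rewrite (mcomp_self_mcomp hV s f).
  pose P h := VSQ (s, h) /\ self_mcomp VSQ (h, f).
  apply: iff_trans (iff_sym (exists_copy_from he P)) _.
  split; case=> h [Vsh Vhf]; exists h; split=> //.
    by rewrite /flip /= VQQ'E; apply: self_mcompC.
  by apply: self_mcompC; exact: Vhf.
Qed.
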